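(* Let $M=(S,R,V)$ and $M'=(S',R',V')$ be finite epistemic models for the same finite set of agents $A$ and set of atoms $P$, such that only finitely many atoms are relevant in $M\cup M'$, and let $s\in S$, $s'\in S'$. Assume $(s,s)\in R(a)$ for every agent $a\in A$, and assume $M$ is a bisimulation contraction. Let $\mathsf{U}'_r=(S',R',\mathsf{pre},\mathsf{post})$ be the update model with event set $S'$, accessibility relations $R'(a)$, $\mathsf{pre}(t')=\delta_{(M,s)}$ for all $t'\in S'$, and, for every relevant atom $p$, $\mathsf{post}(t')(p)=\top$ if $t'\in V'(p)$ and $\bot$ otherwise (irrelevant atoms unchanged). Then $M\otimes\mathsf{U}'_r$ is isomorphic to $M'$.
   Context: An epistemic model is $M=(S,R,V)$ with $S$ a nonempty set, $R:A\to\wp(S\times S)$, $V:P\to\wp(S)$. An atom is relevant in a model if its valuation is neither empty nor the whole domain; ''relevant in $M\cup M'$'' refers to the disjoint union, so an irrelevant atom has the same constant value throughout both models. Bisimulation is the standard notion (atoms agree on linked states, forth and back conditions for each agent's relation); a bisimulation contraction is a model in which any two bisimilar states are identical. The language $\mathcal{L}$ has atoms, $\neg$, $\wedge$, modalities $[a]$, common knowledge modalities $[B^*]$ and update modalities $[\mathsf{U},\mathsf{e}]$. For a finite pointed model $(M,u)$, $\delta_{(M,u)}$ is a characteristic formula: for all formulas $\psi$, $(M,u)\models\psi$ iff $\delta_{(M,u)}\models\psi$. An update model $\mathsf{U}=(\mathsf{E},\mathsf{R},\mathsf{pre},\mathsf{post})$ has finite nonempty event set $\mathsf{E}$, relations $\mathsf{R}(a)\subseteq\mathsf{E}\times\mathsf{E}$,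 preconditions $\mathsf{pre}(\mathsf{e})\in\mathcal{L}$ and postconditions $\mathsf{post}(\mathsf{e}):P\to\mathcal{L}$ differing from the identity on finitely many atoms. The product $M\otimes\mathsf{U}$ has domain $\{(t,\mathsf{f}) : (M,t)\models\mathsf{pre}(\mathsf{f})\}$, $((t,\mathsf{f}),(u,\mathsf{g}))$ in the relation for $a$ iff $(t,u)\in R(a)$ and $(\mathsf{f},\mathsf{g})\in\mathsf{R}(a)$, and $(t,\mathsf{f})$ satisfies $p$ iff $(M,t)\models\mathsf{post}(\mathsf{f})(p)$. *)

From mathcomp Require Import all_boot.
From Stdlib Require Import Relation_Operators List.

Unset Implicit Arguments.
Unset Strict Implicit.
Unset Printing Implicit Defensive.

Section DEL.
Variables (A : finType) (P : Type).

(* Syntax of the language L: atoms, negation, conjunction, [a], [B*],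
   and update modalities [U,e] with U having event set 'I_n.+1
   (finite, nonempty), relations, preconditions and postconditions. *)
Inductive form : Type :=
| Atom of P
| Neg of form
| And of form & form
| Box of A & form
| CK of {set A} & form
| Upd (n : nat) (ER : A -> rel 'I_n.+1) (pre : 'I_n.+1 -> form)
      (post : 'I_n.+1 -> P -> form) (e : 'I_n.+1) (f : form).

Fixpoint wf (phi : form) : Prop :=
  match phi with
  | Atom _ => True
  | Neg f => wf f
  | And f g => wf f /\ wf g
  | Box _ f => wf f
  | CK _ f => wf f
  | Upd n ER pre post e f =>
      (forall e', wf (pre e')) /\
      (forall e' p, wf (post e' p)) /\
      (forall e', exists l : list P, forall p, ~ List.In p l -> post e' p = Atom p) /\
      wf f
  end.

Definition Bot (p : P) : form := And (Atom p) (Neg (Atom p)).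
Definition Top (p : P) : form := Neg (Bot p).

Record model := Model {
  state : Type;
  acc : A -> state -> state -> Prop;
  val : P -> state -> Prop }.

(* Product of a model with an update structure whose preconditions and
   postconditions are given semantically (as truth sets in M). *)
Definition prodm (M : model) (E : Type) (ER : A -> E -> E -> bool)
  (preS : E -> state M -> Prop) (postS : E -> P -> state M -> Prop) : model :=
  @Model {x : state M * E | preS x.2 x.1}
    (fun a x y => @acc M a (sval x).1 (sval y).1 /\ ER a (sval x).2 (sval y).2)
    (fun p x => postS (sval x).2 p (sval x).1).

Fixpoint sat (phi : form) (M : model) (w : state M) {struct phi} : Prop :=
  match phi with
  | Atom p => @val M p w
  | Neg f => ~ sat f M w
  | And f g => sat f M w /\ sat g M w
  | Box a f => forall v, @acc M a w v -> sat f M v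
  | CK B f =>
      forall v, clos_refl_trans (state M) (fun x y => exists2 b, b \in B & @acc M b x y) w v ->
        sat f M v
  | Upd n ER pre post e f =>
      forall H : sat (pre e) M w,
        sat f (prodm M 'I_n.+1 ER (fun e' t => sat (pre e') M t)
                        (fun e' p t => sat (post e' p) M t))
              (exist (fun x : state M * 'I_n.+1 => sat (pre x.2) M x.1) (w, e) H)
  end.

Definition entails (delta psi : form) : Prop :=
  forall (N : model) (w : state N), sat delta N w -> sat psi N w.

Definition characteristic (M : model) (u : state M) (delta : form) : Prop :=
  wf delta /\ forall psi, wf psi -> (sat psi M u <-> entails delta psi).

Definition bisimulation (M N : model) (Z : state M -> state N -> Prop) : Prop :=
  forall x y, Z x y ->
    (forall p, @val M p x <-> @val N p y) /\
    (forall a x', @acc M a x x' -> exists2 y', @acc N a y y' & Z x' y') /\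
    (forall a y', @acc N a y y' -> exists2 x', @acc M a x x' & Z x' y').

Definition bisimilar (M N : model) (x : state M) (y : state N) : Prop :=
  exists2 Z, bisimulation M N Z & Z x y.

Definition bisim_contraction (M : model) : Prop :=
  forall x y : state M, bisimilar M M x y -> x = y.

Definition isomorphic (M N : model) : Prop :=
  exists f : state M -> state N,
    bijective f /\
    (forall a x y, @acc M a x y <-> @acc N a (f x) (f y)) /\
    (forall p x, @val M p x <-> @val N p (f x)).

Definition fmodel (S : finType) (R : A -> rel S) (V : P -> pred S) : model :=
  @Model S (fun a x y => R a x y) (fun p x => V p x).

Definition relevant (S S' : finType) (V : P -> pred S) (V' : P -> pred S') (p : P) : bool :=
  ([exists t, V p t] || [exists t', V' p t']) &&
  ([exists t, ~~ V p t] || [exists t', ~~ V' p t']).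

Definition post_r (S S' : finType) (V : P -> pred S) (V' : P -> pred S')
  (t' : S') (p : P) : form :=
  if relevant S S' V V' p then (if V' p t' then Top p else Bot p) else Atom p.

Definition prod_Ur (S S' : finType) (R : A -> rel S) (V : P -> pred S)
  (R' : A -> rel S') (V' : P -> pred S') (delta : form) : model :=
  prodm (fmodel S R V) S' R' (fun (_ : S') t => sat delta (fmodel S R V) t)
           (fun t' p t => sat (post_r S S' V V' t' p) (fmodel S R V) t).

End DEL.

Arguments Atom {A P}.
Arguments Neg {A P}.
Arguments And {A P}.
Arguments Box {A P}.
Arguments CK {A P}.
Arguments Upd {A P}.

(** A characteristic formula of (M, s) holds exactly at the states of M that
    are modally equivalent to s; on a finite model modal equivalence is a
    bisimulation, so in a bisimulation contraction δ_(M,s) holds at s alone.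
    Hence the states of M ⊗ U'_r are the pairs (s, t') with t' ∈ S', and the
    projection onto t' is a bijection onto S'.  It preserves the relations
    because (s, s) ∈ R(a) for every a, and the valuation because the
    postconditions copy V' on relevant atoms while an irrelevant atom has one
    constant value on all of M ∪ M'. *)

From mathcomp Require Import all_boot.
From Stdlib Require Import Classical ProofIrrelevance.

Definition modal_equiv {A : finType} {P : Type} (M : model A P) (x y : state A P M) : Prop :=
  forall psi, wf A P psi -> (sat A P psi M x <-> sat A P psi M y).

Set Implicit Arguments.
Unset Strict Implicit.

Section ModalEquivalence.

Variables (A : finType) (P : Type).

Lemma modal_equiv_sym (M : model A P) (x y : state A P M) :
  modal_equiv M x y -> modal_equiv M y x.
Proof. by move=> Exy psi wf_psi; apply: iff_sym; apply: Exy. Qed.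

Lemma distinguishing_formula (M : model A P) (x y : state A P M) :
  ~ modal_equiv M x y ->
  exists psi, [/\ wf A P psi, sat A P psi M x & ~ sat A P psi M y].
Proof.
move=> /not_all_ex_not [psi] /(imply_to_and (wf A P psi)) [wf_psi not_iff].
case: (classic (sat A P psi M x)) => [psi_x | npsi_x].
  by exists psi; split => // psi_y; apply: not_iff.
by exists (Neg psi); split => //= npsi_y; apply: not_iff; split.
Qed.

Lemma characteristic_sat (M : model A P) (u : state A P M) (delta : form A P) :
  characteristic A P M u delta -> sat A P delta M u.
Proof. by case=> wf_delta chi; apply/chi. Qed.

Lemma characteristic_modal_equiv (M : model A P) (u t : state A P M)
    (delta : form A P) :
  characteristic A P M u delta -> sat A P delta M t -> modal_equiv M u t.
Proof.
case=> _ chi delta_t psi wf_psi; split => [psi_u | psi_t].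
  exact: (chi psi wf_psi).1 psi_u _ _ delta_t.
apply: NNPP => npsi_u.
exact: (chi (Neg psi) wf_psi).1 npsi_u _ _ delta_t psi_t.
Qed.

End ModalEquivalence.

Section FiniteModel.

Variables (A : finType) (P : Type) (S : finType) (R : A -> rel S) (V : P -> pred S).

Notation M := (fmodel A P S R V).

(* Any well-formed formula yields the constant [Neg (And phi0 (Neg phi0))]:
   the language has no nullary connective, and is empty when [P] is. *)
Variable phi0 : form A P.
Hypothesis wf_phi0 : wf A P phi0.

Lemma distinguishing_formula_seq (x : S) (ys : seq S) :
  (forall y, y \in ys -> ~ modal_equiv M x y) ->
  exists psi, [/\ wf A P psi, sat A P psi M x &
                  forall y, y \in ys -> ~ sat A P psi M y].
Proof.
elim: ys => [|y ys IH] neq_ys.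
  by exists (Neg (And phi0 (Neg phi0))); split => //= [[]].
have [|psi [wf_psi psi_x psi_ys]] := IH.
  by move=> z z_ys; apply: neq_ys; rewrite in_cons z_ys orbT.
have [phi [wf_phi phi_x phi_y]] :=
  distinguishing_formula (neq_ys y (mem_head _ _)).
exists (And psi phi); split => // z.
rewrite in_cons => /predU1P [-> | z_ys] /= [psi_z phi_z].
  exact: phi_y.
exact: psi_ys z z_ys psi_z.
Qed.

(* Hennessy–Milner: some successor of [y] must agree with [x'], otherwise one
   formula refutes all of them and [Neg (Box a (Neg psi))] separates [x] from [y]. *)
Lemma modal_equiv_forth (x y : S) (a : A) (x' : S) :
  modal_equiv M x y -> R a x x' ->
  exists2 y', R a y y' & modal_equiv M x' y'.
Proof.
move=> Exy Rxx'; apply: NNPP => no_y'.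
have [|psi [wf_psi psi_x' psi_succ]] :=
  @distinguishing_formula_seq x' [seq y' <- enum S | R a y y'].
  by move=> y'; rewrite mem_filter => /andP [Ryy' _] Ex'y'; apply: no_y'; exists y'.
have [+ _] := Exy (Neg (Box a (Neg psi))) wf_psi; apply => /=.
- by move=> /(_ x' Rxx').
- by move=> y' Ryy'; apply: psi_succ; rewrite mem_filter Ryy' mem_enum.
Qed.

Lemma modal_equiv_bisimulation : bisimulation A P M M (modal_equiv M).
Proof.
move=> x y Exy; split; [|split].
- by move=> p; apply: (Exy (Atom p)).
- by move=> a x'; apply: modal_equiv_forth.
- move=> a y' Ryy'.
  have [x' Rxx' Ey'x'] := modal_equiv_forth (modal_equiv_sym Exy) Ryy'.
  by exists x' => //; apply: modal_equiv_sym.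
Qed.

End FiniteModel.

Lemma contraction_characteristic_unique (A : finType) (P : Type) (S : finType)
    (R : A -> rel S) (V : P -> pred S) (u t : S) (delta : form A P) :
  bisim_contraction A P (fmodel A P S R V) ->
  characteristic A P (fmodel A P S R V) u delta ->
  sat A P delta (fmodel A P S R V) t -> t = u.
Proof.
move=> contr chi delta_t; apply/esym/contr.
exists (modal_equiv (fmodel A P S R V)).
  by apply: (modal_equiv_bisimulation chi.1).
exact: characteristic_modal_equiv chi delta_t.
Qed.

Section Postconditions.

Variables (A : finType) (P : Type) (S S' : finType).
Variables (R : A -> rel S) (V : P -> pred S) (V' : P -> pred S').

Lemma irrelevant_val (p : P) (t : S) (t' : S') :
  ~~ relevant P S S' V V' p -> V p t = V' p t'.
Proof.
apply: contraNeq; rewrite /relevant.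
case Vt: (V p t); case V't': (V' p t') => // _; apply/andP.
  by split; apply/orP; [left | right]; apply/existsP; [exists t | exists t'; rewrite V't'].
by split; apply/orP; [right | left]; apply/existsP; [exists t' | exists t; rewrite Vt].
Qed.

Lemma sat_post_r (p : P) (t : S) (t' : S') :
  sat A P (post_r A P S S' V V' t' p) (fmodel A P S R V) t <-> V' p t'.
Proof.
rewrite /post_r; case: ifP => [_ | /negbT irr_p].
  by case: (V' p t') => /=; intuition.
by rewrite /= (irrelevant_val t t' irr_p).
Qed.

End Postconditions.

Section Product.

Variables (A : finType) (P : Type) (S S' : finType).
Variables (R : A -> rel S) (V : P -> pred S) (R' : A -> rel S') (V' : P -> pred S').
Variables (s : S) (delta : form A P).
Hypothesis contr : bisim_contraction A P (fmodel A P S R V).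
Hypothesis chi : characteristic A P (fmodel A P S R V) s delta.

Notation N := (prod_Ur A P S S' R V R' V' delta).

Lemma prod_Ur_fst (x : state A P N) : (sval x).1 = s.
Proof. exact: contraction_characteristic_unique contr chi (svalP x). Qed.

Lemma prod_Ur_snd_bij : bijective (fun x : state A P N => (sval x).2).
Proof.
pose pair_s t' : state A P N := exist _ (s, t') (characteristic_sat chi).
exists pair_s => // -[[t t'] delta_t].
have t_s : t = s := prod_Ur_fst (exist _ (t, t') delta_t).
by subst t; congr exist; apply: proof_irrelevance.
Qed.

End Product.

Theorem corollary1 (A : finType) (P : Type)
  (S : finType) (R : A -> rel S) (V : P -> pred S)
  (S' : finType) (R' : A -> rel S') (V' : P -> pred S')
  (s : S) (s' : S') (delta : form A P) :
  (exists l : list P, forall p, relevant P S S' V V' p -> List.In p l) ->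
  (forall a, R a s s) ->
  bisim_contraction A P (fmodel A P S R V) ->
  characteristic A P (fmodel A P S R V) s delta ->
  isomorphic A P (prod_Ur A P S S' R V R' V' delta) (fmodel A P S' R' V').
Proof.
(* Finiteness of the relevant atoms only makes [post_r] a legal postcondition;
   the semantic argument does not need it. *)
move=> _ Rss contr chi.
exists (fun x => (sval x).2); split; first exact: prod_Ur_snd_bij contr chi.
split=> [a x y | p x] /=; last exact: sat_post_r.
by rewrite !(prod_Ur_fst contr chi) Rss; split=> [[]|].
Qed.
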